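(* For every regular matroid $\mathcal M$ (with fixed TU representing matrix $M$), the face poset $\mathcal{FP}^c(\mathcal M)$ of the Voronoi cell at $0$ of the lattice of integer cuts $\Gamma(\mathcal M)$ is isomorphic to the poset $\mathcal{CAC}(\mathcal M)$ of coherent acyclic orientations of submatroids of $\mathcal M$.
   Context: Let $\mathcal M$ be a regular matroid on a finite ground set $E$, represented over $\mathbb R$ by a totally unimodular matrix $M$ with columns $c_e$, $e\in E$; $\mathbb R^E$ has standard basis $\{e\}$ and Euclidean inner product. The lattice of integer cuts is $\Gamma(\mathcal M)=\operatorname{Row}(M)\cap\mathbb Z^E$ with the inherited inner product. Its Voronoi cell at $0$ is $\{x\in\operatorname{Row}(M):\|x\|\le\|x-\mu\|\ \forall\mu\in\Gamma(\mathcal M)\}$, and $\mathcal{FP}^c(\mathcal M)$ is the poset of its nonempty faces ordered by inclusion. An oriented submatroid is a pair $(S,\varepsilon)$ with $S\subseteq E$, $\varepsilon:S\to\{\pm1\}$; let $M^\varepsilon$ be obtained from $M$ by replacing $c_f$ by $\varepsilon_f c_f$ for $f\in S$. $(S,\varepsilon)$ is coherent acyclic if for every $e\in S$ there is $z\in\mathbb Z_{\ge0}^E$ supported in $S$ with $e+z\in\operatorname{Row}(M^\varepsilon)\cap\mathbb Z^E$. $\mathcal{CAC}(\mathcal M)$ is the set of coherent acyclic oriented submatroids ordered by $(S,\varepsilon)\le(S',\varepsilon')$ iff $S'\subseteq S$ and $\varepsilon'=\varepsilon|_{S'}$. *)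

From HB Require Import structures.
From mathcomp Require Import all_boot all_order all_algebra.
From mathcomp Require Import classical_sets reals.
Set Implicit Arguments. Unset Strict Implicit. Unset Printing Implicit Defensive.
Import Order.TTheory GRing.Theory Num.Theory.
Local Open Scope ring_scope.
Local Open Scope classical_set_scope.

Section Defs.
Variables (R : realType) (m n : nat).
(* Ground set E = 'I_n ; R^E = row vectors 'rV[R]_n ; M : m x n real matrix,
   column c_e = col e M. *)

Definition totally_unimodular (M : 'M[R]_(m, n)) : Prop :=
  forall (k : nat) (f : 'I_k -> 'I_m) (g : 'I_k -> 'I_n),
    \det (mxsub f g M) \in [:: 0; 1; -1].

Definition dotv (x y : 'rV[R]_n) : R := \sum_(i < n) x ord0 i * y ord0 i.
Definition normv (x : 'rV[R]_n) : R := Num.sqrt (dotv x x).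

Definition integral_vec (x : 'rV[R]_n) : Prop := forall i, x ord0 i \is a Num.int.

Definition cut_lattice (M : 'M[R]_(m, n)) : set 'rV[R]_n :=
  [set mu | (mu <= M)%MS /\ integral_vec mu].

Definition voronoi_cell (M : 'M[R]_(m, n)) : set 'rV[R]_n :=
  [set x | (x <= M)%MS /\
           forall mu, cut_lattice M mu -> normv x <= normv (x - mu)].

(* nonempty faces of a convex set V: nonempty intersections of V with a
   supporting hyperplane (a = 0, b = 0 gives V itself) *)
Definition is_face (V F : set 'rV[R]_n) : Prop :=
  F !=set0 /\
  exists (a : 'rV[R]_n) (b : R),
    (forall x, V x -> dotv a x <= b) /\ F = [set x | V x /\ dotv a x = b].

Definition face_poset (M : 'M[R]_(m, n)) :=
  {F : set 'rV[R]_n | is_face (voronoi_cell M) F}.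

(* oriented submatroid (S, eps) encoded as o : E -> option bool :
   S = [set e | o e != None], eps_e = +1 if o e = Some true, -1 if Some false *)
Definition oriented_sub := {ffun 'I_n -> option bool}.

Definition sgn (b : bool) : R := if b then 1 else -1.

Definition reorient (M : 'M[R]_(m, n)) (o : oriented_sub) : 'M[R]_(m, n) :=
  \matrix_(i < m, j < n)
     match o j with Some b => sgn b * M i j | None => M i j end.

Definition coherent_acyclic (M : 'M[R]_(m, n)) (o : oriented_sub) : Prop :=
  forall e : 'I_n, o e != None ->
    exists z : 'I_n -> nat,
      (forall f, o f = None -> z f = 0%N) /\
      let v := \row_(j < n) ((j == e)%:R + (z j)%:R : R) in
      (v <= reorient M o)%MS /\ integral_vec v.

(* (S,eps) <= (S',eps') iff S' ⊆ S and eps' = eps|_{S'} *)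
Definition cac_le (o o' : oriented_sub) : Prop :=
  forall e : 'I_n, o' e != None -> o' e = o e.

Definition CAC (M : 'M[R]_(m, n)) := {o : oriented_sub | coherent_acyclic M o}.

End Defs.

From HB Require Import structures.
From mathcomp Require Import all_boot all_order all_algebra.
From mathcomp Require Import classical_sets reals boolp.
From mathcomp Require Import lra.
Import Order.TTheory GRing.Theory Num.Theory.
Local Open Scope ring_scope.
Local Open Scope classical_set_scope.
Set Implicit Arguments. Unset Strict Implicit. Unset Printing Implicit Defensive.

(* Total unimodularity makes every vector [a] of Row(M) a conformal sum of
   {0,+1,-1}-vectors of Row(M) (signed cocircuits), which are lattice points.
   Hence the Voronoi cell V is cut out by the inequalities [a.x <= |a|_1 / 2],
   and projecting well-chosen points of the cube [-1/2,1/2]^E onto Row(M) shows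
   that each of them is tight somewhere on V; so the faces of V are exactly the
   sets F_a where one of them is tight.  Moreover F_a is contained in F_a' iff
   a' is conformal to a, i.e. iff the sign pattern of a' is a restriction of
   that of a, and the sign patterns of vectors of Row(M) are exactly the
   coherent acyclic oriented submatroids: F_a |-> sign pattern of a is the
   required isomorphism. *)

Section SignArithmetic.
Variable R : archiRealFieldType.
Implicit Types x y s t : R.

Definition pm1 : seq R := [:: 0; 1; -1].

Lemma pm1N x : x \in pm1 -> - x \in pm1.
Proof. by rewrite !inE => /or3P [] /eqP ->; rewrite ?oppr0 ?opprK eqxx ?orbT. Qed.

Lemma pm1_mulrr x : x \in pm1 -> x * x = `|x|.
Proof.
by rewrite !inE => /or3P [] /eqP ->; rewrite ?mulr0 ?normr0 ?mulrNN ?mulr1 ?normrN ?normr1.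
Qed.

Lemma pm1_int x : x \in pm1 -> x \is a Num.int.
Proof. by rewrite !inE => /or3P [] /eqP ->; rewrite ?rpredN ?rpred0 ?rpred1. Qed.

Lemma pm1_normr x : x \in pm1 -> x != 0 -> `|x| = 1.
Proof. by rewrite !inE => /or3P [] /eqP ->; rewrite ?eqxx ?normrN ?normr1. Qed.

Lemma pm1_scale_le x y t : y \in pm1 -> (y != 0 -> t <= `|x|) -> t * `|y| <= `|x|.
Proof.
move=> y_pm1 t_le; have [->|y0] := eqVneq y 0; first by rewrite normr0 mulr0.
by rewrite pm1_normr // mulr1 t_le.
Qed.

Lemma pm1_addr_normr_eq0 x y : y \in pm1 -> y * x < 0 -> x + `|x| * y = 0.
Proof.
rewrite !inE => /or3P [] /eqP ->; rewrite ?mul0r ?ltxx //.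
all: case: (ltgtP x 0) => [x0|x0|->]; [rewrite (ltr0_norm x0)|rewrite (gtr0_norm x0)|]; lra.
Qed.

Lemma addr_scale_neq0 x y s : 0 < y * x -> 0 < s -> x + s * y != 0.
Proof.
move=> yx s0; apply/eqP => E.
have : (x + s * y) * x = 0 by rewrite E mul0r.
nra.
Qed.

Lemma addr_scale_conformal x y s : (y != 0 -> x != 0) -> 0 <= s ->
  (y * x < 0 -> s * `|y| <= `|x|) -> x + s * y != 0 -> 0 < (x + s * y) * x.
Proof.
move=> yx0 s0 bound nz.
have [x0|x0|x0] := ltgtP x 0; last first.
- have y0 : y = 0 by case: (eqVneq y 0) => // /yx0; rewrite x0 eqxx.
  by move: nz; rewrite x0 y0 mulr0 addr0 eqxx.
- have [yx|yx] := ltP (y * x) 0; last by nra.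
  have y0 : y < 0 by nra.
  have := bound yx; rewrite (gtr0_norm x0) (ltr0_norm y0) => b.
  by rewrite lt0r mulf_neq0 ?gt_eqF //=; nra.
- have [yx|yx] := ltP (y * x) 0; last by nra.
  have y0 : 0 < y by nra.
  have := bound yx; rewrite (ltr0_norm x0) (gtr0_norm y0) => b.
  by rewrite lt0r mulf_neq0 ?lt_eqF //=; nra.
Qed.

Lemma normrB_conformal x y t : (y != 0 -> 0 < y * x) -> 0 <= t ->
  t * `|y| <= `|x| -> `|x - t * y| = `|x| - t * `|y|.
Proof.
move=> yx t0 bound.
have [y0|y0|->] := ltgtP y 0; last by rewrite normr0 !mulr0 !subr0.
- have x0 : x < 0 by have := yx (ltr0_neq0 y0); nra.
  rewrite (ltr0_norm y0) (ltr0_norm x0) in bound *.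
  by rewrite ler0_norm; nra.
- have x0 : 0 < x by have := yx (lt0r_neq0 y0); nra.
  rewrite (gtr0_norm y0) (gtr0_norm x0) in bound *.
  by rewrite ger0_norm; nra.
Qed.

Lemma int_mulr_le_half mu y : mu \is a Num.int -> `|y| <= 1 / 2 ->
  2 * (mu * y) <= mu * mu.
Proof.
move=> mu_int y_le.
have mu_le : `|mu| <= mu * mu.
  have [->|mu0] := eqVneq mu 0; first by rewrite normr0 mulr0.
  have := norm_intr_ge1 mu_int mu0.
  by rewrite -[mu * mu]expr2 -intr_normK // expr2; nra.
have : mu * y <= `|mu| * `|y| by rewrite -normrM ler_norm.
have : `|mu| * `|y| <= `|mu| * (1 / 2) by rewrite ler_wpM2l.
lra.
Qed.

Lemma mulr_le_half_normr x y : `|y| <= 1 / 2 -> x * y <= `|x| / 2.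
Proof.
move=> y_le; have : x * y <= `|x| * `|y| by rewrite -normrM ler_norm.
have : `|x| * `|y| <= `|x| * (1 / 2) by rewrite ler_wpM2l.
lra.
Qed.

Lemma mulr_half_sign_lt x x' : x' != 0 -> ~~ (0 < x' * x) ->
  x' * ((if x != 0 then Num.sg x else - Num.sg x') / 2) < `|x'| / 2.
Proof.
move=> x'0; rewrite -leNgt => nconf.
have [x0|x0|->] := ltgtP x 0.
- have x'_gt0 : 0 < x' by rewrite lt0r x'0 /=; nra.
  by rewrite /= ltr0_sg // gtr0_norm //; lra.
- have x'_lt0 : x' < 0 by rewrite lt_neqAle x'0 /=; nra.
  by rewrite /= gtr0_sg // ltr0_norm //; lra.
- rewrite /= mulrA mulrN [x' * _]mulrC -normrEsg.
  by have := normr_gt0 x'; rewrite x'0; lra.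
Qed.

Lemma sign_option_agree x x' : x' != 0 ->
  Some (0 < x') = (if x == 0 then None else Some (0 < x)) <-> 0 < x' * x.
Proof.
move=> x'0; have [x0|x0|->] := ltgtP x 0; last by rewrite mulr0 ltxx.
- rewrite nmulr_lgt0 //; split => [[x'_le0]|x'_lt0]; last by rewrite (lt_gtF x'_lt0).
  by rewrite lt_neqAle x'0 leNgt x'_le0.
- by rewrite pmulr_lgt0 //; split => [[->]|->].
Qed.

Lemma small_scale_exists (I : finType) (u v : I -> R) :
  (forall i, v i != 0 -> u i != 0) ->
  exists2 t, 0 < t & forall i, t * `|v i| <= `|u i|.
Proof.
move=> vu; pose q i := `|v i| / `|u i|.
have q_ge0 i : 0 <= q i by rewrite divr_ge0.
set S := \sum_i q i; have S_ge0 : 0 <= S by apply: sumr_ge0.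
exists (1 + S)^-1; first by rewrite invr_gt0; lra.
move=> i; have [->|vi0] := eqVneq (v i) 0; first by rewrite normr0 mulr0.
have ui_gt0 : 0 < `|u i| by rewrite normr_gt0 vu.
have qS : q i <= S by rewrite /S (bigD1 i) //= lerDl sumr_ge0.
have -> : `|v i| = q i * `|u i| by rewrite /q divfK ?gt_eqF.
rewrite mulrA ler_piMl ?(ltW ui_gt0) // mulrC ler_pdivrMr; lra.
Qed.

End SignArithmetic.

Section InnerProduct.
Variables (R : realType) (n : nat).
Implicit Types a b x y : 'rV[R]_n.

Lemma dotvC a x : dotv a x = dotv x a.
Proof. by apply: eq_bigr => i _; rewrite mulrC. Qed.

Lemma dotvDl a b x : dotv (a + b) x = dotv a x + dotv b x.
Proof. by rewrite /dotv -big_split; apply: eq_bigr => i _; rewrite mxE mulrDl. Qed.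

Lemma dotvZl (t : R) a x : dotv (t *: a) x = t * dotv a x.
Proof. by rewrite /dotv mulr_sumr; apply: eq_bigr => i _; rewrite mxE mulrA. Qed.

Lemma dotvBl a b x : dotv (a - b) x = dotv a x - dotv b x.
Proof. by rewrite dotvDl -scaleN1r dotvZl mulN1r. Qed.

Lemma dotvBr a b x : dotv x (a - b) = dotv x a - dotv x b.
Proof. by rewrite dotvC dotvBl !(dotvC x). Qed.

Lemma dotv_mulmx a x : dotv a x = (a *m x^T) 0 0.
Proof. by rewrite mxE; apply: eq_bigr => i _; rewrite mxE. Qed.

Lemma dotvv_ge0 x : 0 <= dotv x x.
Proof. by apply: sumr_ge0 => i _; rewrite -expr2 sqr_ge0. Qed.

Lemma dotvv_eq0 x : dotv x x = 0 -> x = 0.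
Proof.
move=> /psumr_eq0P x0; apply/rowP => j; rewrite mxE.
by apply/eqP; rewrite -[_ == 0]orbb -mulf_eq0 x0 // => i _; rewrite -expr2 sqr_ge0.
Qed.

Lemma normv_le x y : (normv x <= normv y) = (dotv x x <= dotv y y).
Proof. by rewrite ler_sqrt ?dotvv_ge0. Qed.

End InnerProduct.

Section RowSpace.
Variables (R : realType) (m n : nat) (M : 'M[R]_(m, n)).
Implicit Types a v y : 'rV[R]_n.

Lemma dotv_row_kermx_tr a v : (a <= M)%MS -> (v <= kermx M^T)%MS -> dotv a v = 0.
Proof.
move=> /submxP [z ->] /sub_kermxP vM.
by rewrite dotv_mulmx -mulmxA -[M *m v^T]trmxK trmx_mul trmxK vM trmx0 mulmx0 mxE.
Qed.

Lemma capmx_kermx_tr : (M :&: kermx M^T)%MS == 0.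
Proof.
rewrite -submx0; apply/rV_subP => v /[dup] /submx_trans vM /submx_trans vK.
have := dotv_row_kermx_tr (vM _ _ (capmxSl _ _)) (vK _ _ (capmxSr _ _)).
by move/dotvv_eq0 ->; rewrite sub0mx.
Qed.

Lemma row_kermx_tr_decomp y : exists p, (p <= M)%MS /\ (y - p <= kermx M^T)%MS.
Proof.
have full : (1%:M <= M + kermx M^T)%MS.
  rewrite sub1mx /row_full.
  have := mxrank_sum_cap M (kermx M^T).
  rewrite (eqP capmx_kermx_tr) mxrank0 addn0 mxrank_ker mxrank_tr => ->.
  by rewrite subnKC // rank_leq_col.
have /sub_addsmxP [u ->] : (y <= M + kermx M^T)%MS by apply: submx_trans full; apply: submx1.
by exists (u.1 *m M); rewrite addrC addKr !submxMl.
Qed.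

End RowSpace.

Section RconsFun.
Variables (T : Type) (k : nat).

Definition rcons_fun (d : 'I_k -> T) (j : T) (t : 'I_k.+1) : T :=
  if unlift ord_max t is Some t' then d t' else j.

Lemma rcons_fun_max d j : rcons_fun d j ord_max = j.
Proof. by rewrite /rcons_fun unlift_none. Qed.

Lemma rcons_fun_lift d j t : rcons_fun d j (lift ord_max t) = d t.
Proof. by rewrite /rcons_fun liftK. Qed.

End RconsFun.

Section MinorExpansion.
Variables (R : comPzRingType) (m n : nat) (A : 'M[R]_(m, n)).

Lemma det_mxsub_rcons_col k (f : 'I_k.+1 -> 'I_m) (d : 'I_k -> 'I_n) j :
  \det (mxsub f (rcons_fun d j) A) =
  \sum_i A (f i) j * ((-1) ^+ (i + @ord_max k) * \det (row' i (mxsub f d A))).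
Proof.
rewrite (expand_det_col _ ord_max); apply: eq_bigr => i _.
rewrite /cofactor !mxE rcons_fun_max; congr (_ * (_ * \det _)).
by apply/matrixP => a b; rewrite !mxE rcons_fun_lift.
Qed.

Lemma det_mxsub_rcons_row k (f : 'I_k -> 'I_m) i (h : 'I_k.+1 -> 'I_n) :
  \det (mxsub (rcons_fun f i) h A) =
  \sum_t A i (h t) * ((-1) ^+ (@ord_max k + t) * \det (col' t (mxsub f h A))).
Proof.
rewrite (expand_det_row _ ord_max); apply: eq_bigr => t _.
rewrite /cofactor !mxE rcons_fun_max; congr (_ * (_ * \det _)).
by apply/matrixP => a b; rewrite !mxE rcons_fun_lift.
Qed.

Lemma det_mxsub_neq0_leq k (f : 'I_k -> 'I_m) (g : 'I_k -> 'I_n) :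
  \det (mxsub f g A) != 0 -> (k <= m)%N.
Proof.
move=> det_neq0; suff /leq_card : injective f by rewrite !card_ord.
move=> i1 i2 fi; apply/eqP; apply: contraNT det_neq0 => i12; apply/eqP.
by apply: (determinant_alternate i12) => j; rewrite !mxE fi.
Qed.

End MinorExpansion.

Section ElementaryVectors.
Variables (R : realType) (m n : nat) (M : 'M[R]_(m, n)).
Hypothesis M_TU : totally_unimodular M.

Definition pm1_row (w : 'rV[R]_n) := forall j, w 0 j \in pm1 R.

Definition cramer_row k (f : 'I_k.+1 -> 'I_m) (d : 'I_k -> 'I_n) : 'rV[R]_n :=
  \row_j \det (mxsub f (rcons_fun d j) M).

Lemma cramer_row_sub k (f : 'I_k.+1 -> 'I_m) d : (cramer_row f d <= M)%MS.
Proof.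
have -> : cramer_row f d = \sum_(i < k.+1)
    ((-1) ^+ (i + @ord_max k) * \det (row' i (mxsub f d M))) *: row (f i) M.
  apply/rowP => j; rewrite mxE det_mxsub_rcons_col summxE.
  by apply: eq_bigr => i _; rewrite !mxE mulrC.
by apply: summx_sub => i _; apply/scalemx_sub/row_sub.
Qed.

(* If all these bordered minors vanished, expanding them along the new row and
   combining the rows with the coefficients [y] would give [kappa * c_e = 0]. *)
Lemma bordered_minor_neq0 (y : 'rV[R]_m) k (f : 'I_k.+1 -> 'I_m)
    (d : 'I_k -> 'I_n) j e :
  let c := y *m M in
  (forall t, c 0 (d t) = 0) -> c 0 j = 0 -> c 0 e != 0 ->
  \det (mxsub f (rcons_fun d j) M) != 0 ->
  exists i, \det (mxsub (rcons_fun f i) (rcons_fun (rcons_fun d j) e) M) != 0.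
Proof.
move=> c cd0 cj0 ce0 det_neq0; set h := rcons_fun (rcons_fun d j) e.
apply/existsP; move: ce0; apply: contraNT; rewrite negb_exists => /forallP all0.
set kappa := fun t : 'I_k.+2 => (-1) ^+ (@ord_max k.+1 + t) * \det (col' t (mxsub f h M)).
have rows0 i : \sum_t M i (h t) * kappa t = 0.
  by rewrite -det_mxsub_rcons_row; apply/eqP; rewrite -[_ == 0]negbK all0.
have combine : \sum_t kappa t * c 0 (h t) = 0.
  transitivity (\sum_i y 0 i * \sum_t M i (h t) * kappa t); last first.
    by rewrite big1 // => i _; rewrite rows0 mulr0.
  under [RHS]eq_bigr => i _ do rewrite mulr_sumr.
  rewrite exchange_big; apply: eq_bigr => t _.
  by rewrite mxE mulr_sumr; apply: eq_bigr => i _; rewrite mulrC -mulrA.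
have only_e : \sum_t kappa t * c 0 (h t) = kappa ord_max * c 0 e.
  rewrite (bigD1 ord_max) //= big1 ?addr0 /h ?rcons_fun_max // => t tmax.
  case: (unliftP ord_max t) tmax => [t' ->|->]; last by rewrite eqxx.
  rewrite rcons_fun_lift /rcons_fun.
  by case: (unlift ord_max t') => [t''|] _; rewrite ?cd0 ?cj0 mulr0.
have kappa_neq0 : kappa ord_max != 0.
  rewrite mulf_neq0 ?signr_eq0 //.
  suff -> : col' ord_max (mxsub f h M) = mxsub f (rcons_fun d j) M by [].
  by apply/matrixP => a b; rewrite !mxE /h rcons_fun_lift.
by move: combine; rewrite only_e => /eqP; rewrite mulf_eq0 (negbTE kappa_neq0).
Qed.

(* Border the nonsingular minor [f x (d, e)] by columns where [c] vanishes for
   as long as possible; then its Cramer row is the required vector, with entries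
   in {0,+1,-1} by total unimodularity. *)
Lemma elementary_row_of_minor (y : 'rV[R]_m) e k (f : 'I_k.+1 -> 'I_m)
    (d : 'I_k -> 'I_n) :
  let c := y *m M in
  c 0 e != 0 -> (forall t, c 0 (d t) = 0) -> \det (mxsub f (rcons_fun d e) M) != 0 ->
  exists w, [/\ (w <= M)%MS, pm1_row w, w 0 e != 0 & forall j, c 0 j = 0 -> w 0 j = 0].
Proof.
move=> c ce0; move: {2}(m - k)%N (leqnn (m - k)) => N.
elim: N k f d => [|N IH] k f d mk cd0 det_neq0.
  move: mk; rewrite leqn0 subn_eq0 => /(leq_trans (det_mxsub_neq0_leq det_neq0)).
  by rewrite ltnn.
have [/existsP [j /andP [/eqP cj0 detj_neq0]]|all_singular] :=
  boolP [exists j, (c 0 j == 0) && (\det (mxsub f (rcons_fun d j) M) != 0)].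
  have [i deti_neq0] := bordered_minor_neq0 cd0 cj0 ce0 detj_neq0.
  apply: (IH k.+1 (rcons_fun f i) (rcons_fun d j)) => //.
    by rewrite subnS; move: mk; case: (m - k)%N.
  by move=> t; rewrite /rcons_fun; case: (unlift ord_max t).
exists (cramer_row f d); split.
- exact: cramer_row_sub.
- by move=> j; rewrite mxE; apply: M_TU.
- by rewrite mxE.
- move=> j cj0; rewrite mxE; apply/eqP; apply: contraNT all_singular => detj_neq0.
  by apply/existsP; exists j; rewrite cj0 eqxx.
Qed.

Lemma elementary_row_exists (y : 'rV[R]_m) e : let c := y *m M in
  c 0 e != 0 ->
  exists w, [/\ (w <= M)%MS, pm1_row w, w 0 e != 0 & forall j, c 0 j = 0 -> w 0 j = 0].
Proof.
move=> c ce0; have [i0 Mi0e] : exists i, M i e != 0.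
  apply/existsP; move: ce0; apply: contraNT; rewrite negb_exists => /forallP M0.
  by rewrite mxE big1 // => i _; move/negPn/eqP: (M0 i) ->; rewrite mulr0.
apply: (@elementary_row_of_minor y e 0 (fun _ => i0) (fun _ => e)) => //; first by case.
by rewrite det_mxsub_rcons_col big_ord1 det_mx00 mulr1 expr0 mulr1.
Qed.

End ElementaryVectors.

Section Conformal.
Variables (R : realDomainType) (n : nat).
Implicit Types a b w : 'rV[R]_n.

Definition conformal w a := forall f, w 0 f != 0 -> 0 < w 0 f * a 0 f.

Definition supp a : {set 'I_n} := [set f | a 0 f != 0].

Lemma conformal_eq0 w a f : conformal w a -> a 0 f = 0 -> w 0 f = 0.
Proof. by move=> wa af0; apply/eqP; apply: contraT => /wa; rewrite af0 mulr0 ltxx. Qed.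

Lemma conformal_neq0 w a f : conformal w a -> w 0 f != 0 -> a 0 f != 0.
Proof. by move=> wa /wa; apply: contraTneq => ->; rewrite mulr0 ltxx. Qed.

Lemma conformal_trans b w a : conformal w b -> conformal b a -> conformal w a.
Proof.
move=> wb ba f wf0; have := wb f wf0.
have [->|bf0] := eqVneq (b 0 f) 0; first by rewrite mulr0 ltxx.
by have := ba f bf0; nra.
Qed.

Lemma supp_eq0 a : (#|supp a| == 0)%N = (a == 0).
Proof.
rewrite cards_eq0; apply/eqP/eqP => [/setP sa|->]; last first.
  by apply/setP => f; rewrite !inE mxE eqxx.
by apply/rowP => f; have := sa f; rewrite !inE mxE => /negbFE/eqP.
Qed.

Lemma supp_ind (P : 'rV[R]_n -> Prop) : P 0 ->
  (forall a e, a 0 e != 0 -> (forall b, (#|supp b| < #|supp a|)%N -> P b) -> P a) ->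
  forall a, P a.
Proof.
move=> P0 IH a; move Na: #|supp a| => N; elim/ltn_ind: N a Na => N IHN a Na.
have [/eqP|/card_gt0P [e]] := posnP #|supp a|; first by rewrite supp_eq0 => /eqP ->.
by rewrite inE => ae0; apply: (IH _ _ ae0) => b ba; apply: (IHN #|supp b|); rewrite -?Na.
Qed.

Lemma supp_card_lt b a f : (forall g, a 0 g = 0 -> b 0 g = 0) ->
  a 0 f != 0 -> b 0 f = 0 -> (#|supp b| < #|supp a|)%N.
Proof.
move=> ba af0 bf0; apply: proper_card; apply/properP; split.
  by apply/fintype.subsetP => g; rewrite !inE; apply: contra_neq => /ba.
by exists f; rewrite !inE ?af0 ?bf0 ?eqxx.
Qed.

End Conformal.

Section ConformalElementaryVectors.
Variables (R : realType) (m n : nat) (M : 'M[R]_(m, n)).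
Hypothesis M_TU : totally_unimodular M.
Implicit Types a w : 'rV[R]_n.

Lemma elementary_row_sign_exists a e : (a <= M)%MS -> a 0 e != 0 ->
  exists w, [/\ (w <= M)%MS, pm1_row w, 0 < w 0 e * a 0 e
              & forall j, a 0 j = 0 -> w 0 j = 0].
Proof.
move=> /submxP [y ->] ae0.
have [w [wM w_pm1 we0 w_supp]] := elementary_row_exists M_TU ae0.
have [we_le0|we_gt0] := leP (w 0 e * (y *m M) 0 e) 0; last by exists w.
exists (- w); split.
- by rewrite -scaleN1r scalemx_sub.
- by move=> j; rewrite mxE pm1N.
- by rewrite mxE mulNr oppr_gt0 lt_neqAle we_le0 andbT mulf_neq0.
- by move=> j /w_supp; rewrite mxE => ->; rewrite oppr0.
Qed.

(* Adding [|a_fm| *: w], with [fm] the conflicting coordinate of least weight,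
   kills [fm] without creating new sign conflicts. *)
Lemma conformal_row_shrink a w : (a <= M)%MS -> (w <= M)%MS -> pm1_row w ->
  (forall j, a 0 j = 0 -> w 0 j = 0) -> ~ conformal w a ->
  exists a', [/\ (a' <= M)%MS, conformal a' a, (#|supp a'| < #|supp a|)%N
               & forall e, 0 < w 0 e * a 0 e -> a' 0 e != 0].
Proof.
move=> aM wM w_pm1 w_supp /existsNP [f0 /not_implyP [wf0 /negP nconf]].
have conflict0 : w 0 f0 * a 0 f0 < 0.
  rewrite lt_neqAle leNgt nconf andbT mulf_neq0 //.
  by apply: contraNneq wf0 => /w_supp ->.
have [fm conflict_fm fm_min] :=
  @arg_minP _ _ _ f0 (fun f => w 0 f * a 0 f < 0) (fun f => `|a 0 f|) conflict0.
set s := `|a 0 fm|.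
have a'_conf : conformal (a + s *: w) a.
  move=> f; rewrite !mxE; apply: addr_scale_conformal; rewrite ?normr_ge0 //.
    by apply: contra_neq => /w_supp.
  by move=> conflict; apply: pm1_scale_le => // _; apply: fm_min.
exists (a + s *: w); split => //.
- by rewrite addmx_sub // scalemx_sub.
- apply: (supp_card_lt (f := fm)).
  + by move=> g; apply: conformal_eq0.
  + by apply: contraTneq conflict_fm => ->; rewrite mulr0 ltxx.
  + by rewrite !mxE pm1_addr_normr_eq0.
- move=> e we; rewrite !mxE addr_scale_neq0 // normr_gt0.
  by apply: contraTneq conflict_fm => ->; rewrite mulr0 ltxx.
Qed.

Lemma conformal_elementary_row_exists a e : (a <= M)%MS -> a 0 e != 0 ->
  exists w, [/\ (w <= M)%MS, pm1_row w, w 0 e != 0 & conformal w a].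
Proof.
elim/supp_ind: a e => [e _|a _ _ IH e aM ae0]; first by rewrite mxE eqxx.
have [w [wM w_pm1 we w_supp]] := elementary_row_sign_exists aM ae0.
have [w_conf|w_nconf] := pselect (conformal w a).
  by exists w; split => //; apply: contraTneq we => ->; rewrite mul0r ltxx.
have [a' [a'M a'_conf card_a' a'e]] := conformal_row_shrink aM wM w_pm1 w_supp w_nconf.
have [w' [w'M w'_pm1 w'e w'_conf]] := IH a' card_a' e a'M (a'e e we).
by exists w'; split => //; apply: conformal_trans w'_conf a'_conf.
Qed.

End ConformalElementaryVectors.

Section VoronoiCell.
Variables (R : realType) (m n : nat) (M : 'M[R]_(m, n)).
Implicit Types a b p w x y : 'rV[R]_n.

Definition norm1 a := \sum_f `|a 0 f|.

Lemma norm1_0 : norm1 0 = 0.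
Proof. by rewrite /norm1 big1 // => f _; rewrite mxE normr0. Qed.

Lemma dotv0l x : dotv 0 x = 0.
Proof. by rewrite /dotv big1 // => f _; rewrite mxE mul0r. Qed.

Lemma dotv_pm1_row w : pm1_row w -> dotv w w = norm1 w.
Proof. by move=> w_pm1; apply: eq_bigr => f _; apply: pm1_mulrr. Qed.

Lemma pm1_row_cut w : (w <= M)%MS -> pm1_row w -> cut_lattice M w.
Proof. by move=> wM w_pm1; split => // f; apply: pm1_int. Qed.

Lemma voronoi_dotv_le x w : voronoi_cell M x -> cut_lattice M w ->
  2 * dotv w x <= dotv w w.
Proof.
move=> [_ xV] wL; have := xV w wL; rewrite normv_le.
by rewrite !dotvBl !dotvBr (dotvC x w); lra.
Qed.

(* For an integer point [mu], [2 mu.y <= mu.mu] coordinatewise, and [mu.p = mu.y]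
   because [y - p] is orthogonal to Row(M). *)
Lemma voronoi_proj_half_cube y p : (forall f, `|y 0 f| <= 1 / 2) ->
  (p <= M)%MS -> (y - p <= kermx M^T)%MS -> voronoi_cell M p.
Proof.
move=> y_le pM yp_ker; split => // mu [muM mu_int].
have mu_p : dotv mu p = dotv mu y.
  by apply/eqP; rewrite eq_sym -subr_eq0 -dotvBr (dotv_row_kermx_tr muM yp_ker).
have : 2 * dotv mu y <= dotv mu mu.
  by rewrite /dotv mulr_sumr; apply: ler_sum => f _; apply: int_mulr_le_half.
by rewrite normv_le !dotvBl !dotvBr (dotvC p mu) mu_p; lra.
Qed.

Hypothesis M_TU : totally_unimodular M.

(* Peel off [t w] with [w] a conformal elementary vector, hence a lattice point
   satisfying [2 w.x <= w.w = |w|_1]. *)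
Lemma voronoi_dotv_le_norm1 a x : (a <= M)%MS -> voronoi_cell M x ->
  dotv a x <= norm1 a / 2.
Proof.
move=> + xV; elim/supp_ind: a => [_|a e ae0 IH aM].
  by rewrite dotv0l norm1_0 mul0r.
have [w [wM w_pm1 we w_conf]] := conformal_elementary_row_exists M_TU aM ae0.
have [fm wfm fm_min] := @arg_minP _ _ _ e (fun f => w 0 f != 0) (fun f => `|a 0 f|) we.
set t := `|a 0 fm|; set a1 := a - t *: w.
have t_bound f : t * `|w 0 f| <= `|a 0 f| by apply: pm1_scale_le => // /fm_min.
have a1_norm f : `|a1 0 f| = `|a 0 f| - t * `|w 0 f|.
  by rewrite !mxE normrB_conformal ?normr_ge0 //; apply: w_conf.
have card_a1 : (#|supp a1| < #|supp a|)%N.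
  apply: (supp_card_lt (f := fm)) => [g ag0||].
  - by rewrite !mxE ag0 (conformal_eq0 w_conf ag0) mulr0 subr0.
  - by apply: contraTneq (w_conf fm wfm) => ->; rewrite mulr0 ltxx.
  - by apply/normr0_eq0; rewrite a1_norm (pm1_normr (w_pm1 fm) wfm) mulr1 subrr.
have a1M : (a1 <= M)%MS by rewrite addmx_sub // -scaleNr scalemx_sub.
have := IH a1 card_a1 a1M.
have -> : norm1 a1 = norm1 a - t * norm1 w.
  by rewrite /norm1 (eq_bigr _ (fun f _ => a1_norm f)) sumrB mulr_sumr.
have : t * (2 * dotv w x) <= t * norm1 w.
  rewrite ler_wpM2l ?normr_ge0 // -dotv_pm1_row //.
  by apply: voronoi_dotv_le => //; apply: pm1_row_cut.
rewrite /a1 dotvBl dotvZl; lra.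
Qed.

End VoronoiCell.

Section VoronoiFaces.
Variables (R : realType) (m n : nat) (M : 'M[R]_(m, n)).
Hypothesis M_TU : totally_unimodular M.
Implicit Types a b x : 'rV[R]_n.

Definition voronoi_face a := [set x | voronoi_cell M x /\ dotv a x = norm1 a / 2].

(* A maximizer of [dotv a] on the cube [-1/2,1/2]^E which, off the support of
   [a], points away from [a']: it separates the face of [a] from that of [a']
   unless [a'] is conformal to [a]. *)
Definition half_sign a a' : 'rV[R]_n :=
  \row_f ((if a 0 f != 0 then Num.sg (a 0 f) else - Num.sg (a' 0 f)) / 2).

Lemma half_sign_le a a' f : `|half_sign a a' 0 f| <= 1 / 2.
Proof.
rewrite mxE normrM normfV normr_nat ler_pM2r ?invr_gt0 ?ltr0n //.
by case: ifP => _; rewrite ?normrN normr_sg; case: (_ != 0).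
Qed.

Lemma dotv_half_sign a a' : dotv a (half_sign a a') = norm1 a / 2.
Proof.
rewrite /dotv /norm1 mulr_suml; apply: eq_bigr => f _; rewrite mxE.
case: ifP => [_|/negbFE/eqP ->]; last by rewrite mul0r normr0 mul0r.
by rewrite mulrA [_ * Num.sg _]mulrC -normrEsg.
Qed.

Lemma voronoi_half_sign a a' : exists p, voronoi_cell M p /\
  forall b, (b <= M)%MS -> dotv b p = dotv b (half_sign a a').
Proof.
have [p [pM ker]] := row_kermx_tr_decomp M (half_sign a a').
exists p; split; first exact: voronoi_proj_half_cube (@half_sign_le a a') pM ker.
by move=> b bM; apply/eqP; rewrite eq_sym -subr_eq0 -dotvBr (dotv_row_kermx_tr bM ker).
Qed.

Lemma voronoi_face_is_face a : (a <= M)%MS -> is_face (voronoi_cell M) (voronoi_face a).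
Proof.
move=> aM; split.
  have [p [pV p_dot]] := voronoi_half_sign a a.
  by exists p; split; rewrite // p_dot // dotv_half_sign.
by exists a, (norm1 a / 2); split=> // x; apply: voronoi_dotv_le_norm1.
Qed.

Lemma is_face_voronoi_face F : is_face (voronoi_cell M) F ->
  exists2 a, (a <= M)%MS & F = voronoi_face a.
Proof.
move=> [[x Fx] [a0 [b [a0_le EF]]]]; subst F.
have [a [aM ker]] := row_kermx_tr_decomp M a0.
have a0a z : voronoi_cell M z -> dotv a0 z = dotv a z.
  move=> [zM _]; apply/eqP; rewrite -subr_eq0 -dotvBl dotvC.
  by rewrite (dotv_row_kermx_tr zM ker).
have -> : b = norm1 a / 2.
  case: Fx => xV bx; apply/eqP.
  rewrite eq_le -{1}bx a0a // (voronoi_dotv_le_norm1 M_TU aM xV) /=.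
  have [p [pV p_dot]] := voronoi_half_sign a a.
  by rewrite -(dotv_half_sign a a) -p_dot // -a0a //; apply: a0_le.
exists a => //; apply/seteqP; split => z [zV zF]; split => //.
  by rewrite -a0a.
by rewrite a0a.
Qed.

End VoronoiFaces.

Section FaceOrder.
Variables (R : realType) (m n : nat) (M : 'M[R]_(m, n)).
Hypothesis M_TU : totally_unimodular M.
Implicit Types a b : 'rV[R]_n.

Lemma voronoi_face_subset a a' : (a <= M)%MS -> (a' <= M)%MS ->
  voronoi_face M a `<=` voronoi_face M a' <-> conformal a' a.
Proof.
move=> aM a'M; split => [face_sub e a'e0|a'a x [xV ax]].
  apply: contraT => nconf.
  have [p [pV p_dot]] := voronoi_half_sign M a a'.
  have [_] := face_sub p (conj pV (etrans (p_dot a aM) (dotv_half_sign a a'))).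
  rewrite p_dot // => a'h.
  pose g f := `|a' 0 f| / 2 - a' 0 f * half_sign a a' 0 f.
  have g_ge0 f : 0 <= g f by rewrite subr_ge0 mulr_le_half_normr ?half_sign_le.
  have /psumr_eq0P ge0 : \sum_f g f = 0.
    by rewrite sumrB -mulr_suml -/(norm1 a') -/(dotv a' _) a'h subrr.
  have := mulr_half_sign_lt a'e0 nconf; rewrite lt_neqAle => /andP [/eqP []].
  move: (ge0 (fun f _ => g_ge0 f) e isT); rewrite /g mxE => /eqP.
  by rewrite subr_eq0 => /eqP ->.
have [t t_gt0 t_le] := @small_scale_exists _ _ (fun f => a 0 f) (fun f => a' 0 f)
  (fun f => conformal_neq0 a'a).
split => //; apply/eqP; rewrite eq_le (voronoi_dotv_le_norm1 M_TU a'M xV) /=.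
set b := a - t *: a'.
have bM : (b <= M)%MS by rewrite addmx_sub // -scaleNr scalemx_sub.
have b_norm f : `|b 0 f| = `|a 0 f| - t * `|a' 0 f|.
  by rewrite !mxE normrB_conformal ?(ltW t_gt0) //; apply: a'a.
have := voronoi_dotv_le_norm1 M_TU bM xV.
rewrite /b dotvBl dotvZl ax /norm1 (eq_bigr _ (fun f _ => b_norm f)) sumrB -mulr_sumr.
rewrite -/(norm1 a) -/(norm1 a') => h.
rewrite -(ler_pM2l t_gt0); lra.
Qed.

End FaceOrder.

Section Orientations.
Variables (R : realType) (m n : nat) (M : 'M[R]_(m, n)).
Implicit Types (a : 'rV[R]_n) (o : oriented_sub n).

Definition sign_pattern a : oriented_sub n :=
  [ffun f => if a 0 f == 0 then None else Some (0 < a 0 f)].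

Lemma cac_le_sign_pattern a a' :
  cac_le (sign_pattern a) (sign_pattern a') <-> conformal a' a.
Proof.
split => [le_aa' f a'f0|a'a f].
  by apply/(sign_option_agree _ a'f0); move: (le_aa' f); rewrite !ffunE (negbTE a'f0); apply.
by rewrite !ffunE; have [//|a'f0 _] := eqVneq (a' 0 f) 0; apply/sign_option_agree/a'a.
Qed.

Lemma cac_le_anti o o' : cac_le o o' -> cac_le o' o -> o = o'.
Proof.
move=> le_oo' le_o'o; apply/ffunP => e.
have [o'e|/le_oo' -> //] := eqVneq (o' e) None.
by have [oe|/le_o'o //] := eqVneq (o e) None; rewrite oe o'e.
Qed.

Definition orientation_row o : 'rV[R]_n :=
  \row_j (if o j is Some b then sgn R b else 1).

Lemma reorient_diag o : reorient M o = M *m diag_mx (orientation_row o).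
Proof.
rewrite mul_mx_diag; apply/matrixP => i j; rewrite !mxE.
by case: (o j) => [b|]; rewrite ?mulr1 // mulrC.
Qed.

Lemma reorient_diagK o : reorient M o *m diag_mx (orientation_row o) = M.
Proof.
rewrite reorient_diag !mul_mx_diag; apply/matrixP => i j; rewrite !mxE -mulrA.
by case: (o j) => [[]|]; rewrite /sgn /= ?mulrNN !mulr1.
Qed.

Lemma pm1_mul_sgn x y : y \in pm1 R -> y != 0 -> 0 < y * x -> y * sgn R (0 < x) = 1.
Proof.
rewrite !inE => /or3P [] /eqP -> y0; first by rewrite eqxx in y0.
  by rewrite mul1r => ->; rewrite mulr1.
by rewrite mulN1r oppr_gt0 => /lt_gtF ->; rewrite mulrNN mulr1.
Qed.

(* Reorienting by the sign pattern of [a] turns a conformal elementary vector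
   through [e] into the 0/1 vector required by coherence. *)
Lemma sign_pattern_coherent_acyclic a : totally_unimodular M -> (a <= M)%MS ->
  coherent_acyclic M (sign_pattern a).
Proof.
move=> M_TU aM e; rewrite ffunE; have [//|ae0 _] := eqVneq (a 0 e) 0.
have [w [wM w_pm1 we w_conf]] := conformal_elementary_row_exists M_TU aM ae0.
exists (fun j => if j == e then 0%N else (w 0 j != 0) : nat); split.
  move=> f; rewrite ffunE; have [/(conformal_eq0 w_conf) -> _|//] := eqVneq (a 0 f) 0.
  by case: (f == e); rewrite ?eqxx.
move=> v; split; last by move=> j; rewrite /v mxE rpredD ?natr_int.
have -> : v = w *m diag_mx (orientation_row (sign_pattern a)).
  apply/rowP => j; rewrite mul_mx_diag !mxE ffunE.
  have [->|_] := eqVneq j e.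
    by rewrite addr0 (negbTE ae0) (pm1_mul_sgn (w_pm1 e) we (w_conf e we)).
  rewrite add0r; have [->|wj0] := eqVneq (w 0 j) 0; first by rewrite mul0r.
  by rewrite (negbTE (conformal_neq0 w_conf wj0)) (pm1_mul_sgn (w_pm1 j) wj0 (w_conf j wj0)).
by rewrite reorient_diag submxMr.
Qed.

(* [u] is the sum of the coherence witnesses of all [e] in the support of [o]. *)
Lemma coherent_acyclic_pos_row o : coherent_acyclic M o ->
  exists2 u : 'rV[R]_n, (u <= reorient M o)%MS &
    forall j, (o j = None -> u 0 j = 0) /\ (o j != None -> 0 < u 0 j).
Proof.
move=> o_cac.
have /choice [z z_spec] : forall e, exists z : 'I_n -> nat, o e != None ->
    (forall f, o f = None -> z f = 0%N) /\
    let v := \row_j ((j == e)%:R + (z j)%:R : R) in (v <= reorient M o)%MS.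
  move=> e; have [_|/o_cac [z [z0 v]]] := eqVneq (o e) None; last by exists z => _; case: v.
  by exists (fun _ => 0%N).
exists (\sum_(e | o e != None) \row_j ((j == e)%:R + (z e j)%:R : R)).
  by apply: summx_sub => e /z_spec [].
move=> j; rewrite summxE; under eq_bigr do rewrite mxE; split => [oj|oj].
  rewrite big1 // => e oe; have [ze0 _] := z_spec e oe.
  rewrite ze0 // (_ : (j == e) = false) ?addr0 //.
  by apply: contraNF oe => /eqP <-; rewrite oj.
rewrite (bigD1 j) //= eqxx; apply: ltr_wpDr.
  by apply: sumr_ge0 => e _; rewrite addr_ge0 ?ler0n.
by rewrite ltr_pwDl ?ler0n ?ltr01.
Qed.

Lemma coherent_acyclic_sign_pattern o : coherent_acyclic M o ->
  exists2 a, (a <= M)%MS & sign_pattern a = o.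
Proof.
move=> /coherent_acyclic_pos_row [u u_sub u_sign].
exists (u *m diag_mx (orientation_row o)); first by rewrite -(reorient_diagK o) submxMr.
apply/ffunP => j; rewrite ffunE mul_mx_diag !mxE; have [u0 u_gt0] := u_sign j.
case oj: (o j) => [b|]; last by rewrite u0 // mul0r eqxx.
have uj : 0 < u 0 j by apply: u_gt0; rewrite oj.
by case: b {oj}; rewrite /sgn /= ?mulr1 ?mulrN1 ?oppr_eq0 ?oppr_gt0 (gt_eqF uj) ?uj ?(lt_gtF uj).
Qed.

End Orientations.

Theorem mainTheorem2 (R : realType) (m n : nat) (M : 'M[R]_(m, n))
    (HTU : totally_unimodular M) :
  exists phi : face_poset M -> CAC M,
    bijective phi /\
    forall F G : face_poset M,
      (sval F `<=` sval G) <-> cac_le (sval (phi F)) (sval (phi G)).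
Proof.
have /choice [a a_spec] : forall F : face_poset M,
    exists a, (a <= M)%MS /\ sval F = voronoi_face M a.
  by move=> F; have [a aM ->] := is_face_voronoi_face HTU (svalP F); exists a.
pose phi F : CAC M := exist _ _ (sign_pattern_coherent_acyclic HTU (a_spec F).1).
have phi_mono F G : sval F `<=` sval G <-> cac_le (sval (phi F)) (sval (phi G)).
  rewrite (a_spec F).2 (a_spec G).2 /=; apply: iff_trans (iff_sym (cac_le_sign_pattern _ _)).
  exact (voronoi_face_subset HTU (a_spec F).1 (a_spec G).1).
have phi_inj : injective phi.
  move=> F G phiFG; apply: eq_sig_hprop => [x p q|]; first exact: Prop_irrelevance.
  by apply/seteqP; split; apply/phi_mono; rewrite phiFG.
have /choice [psi phiK] : forall o : CAC M, exists F, phi F = o.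
  move=> [o o_cac]; have [b bM bo] := coherent_acyclic_sign_pattern o_cac.
  exists (exist _ _ (voronoi_face_is_face HTU bM)); apply: eq_sig_hprop => [x p q|].
    exact: Prop_irrelevance.
  rewrite /= -bo; set F := exist _ _ _; have [aFM faceE] := a_spec F.
  by apply: cac_le_anti; apply/cac_le_sign_pattern;
    [apply/(voronoi_face_subset HTU aFM bM) | apply/(voronoi_face_subset HTU bM aFM)];
    rewrite -faceE.
exists phi; split => //; exists psi => [F|o]; last exact: phiK.
by apply: phi_inj; rewrite phiK.
Qed.
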